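(* Let $\mu$ be in the relative interior of $\Delta$. Suppose the updating rule respects the Blackwell order for $\mu$ and $\varphi=\varphi^{\mu}$ has a contractive error at some $x_1\in\Delta$ but produces no expansive error. Writing $\hat x_1=\varphi(x_1)\ne x_1$, there exists $x_1^*\in\ell(\mu,\hat x_1)$ such that $\varphi(x')=x_1^*$ for all $x'\in\ell^{\circ}(x_1^*,x_1)$.
   Context: Let $\Theta$ be a finite set of states, $|\Theta|=n\ge2$, and $\Delta=\Delta(\Theta)$ the simplex of beliefs. An experiment $\pi:\Theta\to\Delta(S)$ ($S$ finite) with prior $\mu$ induces the Bayesian distribution over posteriors $\rho_B$, a finitely supported distribution on $\Delta$ with mean $\mu$ (every such distribution arises from some experiment). Blackwell order: $\pi\succeq\pi'$ iff $\rho_B'$ is a mean-preserving contraction of $\rho_B$. An updating rule is given, for each prior $\mu$, by a distortion function $\varphi^{\mu}:\Delta\to\Delta$: when the Bayesian posterior is $x$, the decision maker holds belief $\varphi^{\mu}(x)$. For a compact action set $A$, continuous $u:A\times\Theta\to\mathbb{R}$, and consistent choice $a^*:\Delta\to A$ (i.e. $a^*(y)\in\arg\max_{a}\mathbb{E}_y u(a,\theta)$ for all $y$), let $W(x)=\mathbb{E}_x u(a^*(\varphi^{\mu}(x)),\theta)$. The rule respects the Blackwell order for $\mu$ if for all such $A,u,a^*$ and all $\pi\succeq\pi'$, $\mathbb{E}_{\rho_B}W\ge\mathbb{E}_{\rho_B'}W$. For $x,y\in\Delta$, $\ell(x,y)$ is the closed segment between them and $\ell^{\circ}(x,y)=\ell(x,y)\setminus\{x,y\}$.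 $\varphi$ has an expansive error at $x$ if $\varphi(x)\notin\ell(x,\mu)$, and a contractive error at $x$ if $\varphi(x)\in\ell(x,\mu)$ and $\varphi(x)\ne x$. *)

From HB Require Import structures.
From mathcomp Require Import all_boot all_order all_algebra.
From mathcomp Require Import all_classical all_reals topology normedtype.
Import numFieldNormedType.Exports.
Set Implicit Arguments. Unset Strict Implicit. Unset Printing Implicit Defensive.
Import Order.TTheory GRing.Theory Num.Theory.
Local Open Scope ring_scope.
Local Open Scope classical_set_scope.

Section BlackwellDefs.
Variables (R : realType) (n : nat).

(* States are 'I_n; beliefs are row vectors 'rV[R]_n, x ord0 th = prob of th. *)

Definition in_simplex (x : 'rV[R]_n) : Prop :=
  (forall th, 0 <= x ord0 th) /\ \sum_th x ord0 th = 1.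

Definition in_relint_simplex (x : 'rV[R]_n) : Prop :=
  (forall th, 0 < x ord0 th) /\ \sum_th x ord0 th = 1.

Definition segment (x y : 'rV[R]_n) : set 'rV[R]_n :=
  [set z | exists t : R, 0 <= t <= 1 /\ z = (1 - t) *: x + t *: y].

Definition open_segment (x y : 'rV[R]_n) : set 'rV[R]_n :=
  [set z | segment x y z /\ z <> x /\ z <> y].

Definition expansive_error (mu : 'rV[R]_n) (phi : 'rV[R]_n -> 'rV[R]_n)
  (x : 'rV[R]_n) : Prop := ~ segment x mu (phi x).

Definition contractive_error (mu : 'rV[R]_n) (phi : 'rV[R]_n -> 'rV[R]_n)
  (x : 'rV[R]_n) : Prop := segment x mu (phi x) /\ phi x <> x.

(* An experiment with finite signal set 'I_m: pi th s = Prob(s | th). *)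
Definition experiment (m : nat) (pi : 'I_n -> 'I_m -> R) : Prop :=
  forall th, (forall s, 0 <= pi th s) /\ \sum_s pi th s = 1.

Definition sigprob (mu : 'rV[R]_n) (m : nat) (pi : 'I_n -> 'I_m -> R)
  (s : 'I_m) : R := \sum_th mu ord0 th * pi th s.

(* Bayesian posterior after signal s (irrelevant when sigprob = 0) *)
Definition posterior (mu : 'rV[R]_n) (m : nat) (pi : 'I_n -> 'I_m -> R)
  (s : 'I_m) : 'rV[R]_n :=
  \row_th (mu ord0 th * pi th s / sigprob mu pi s).

Definition expect_post (mu : 'rV[R]_n) (m : nat) (pi : 'I_n -> 'I_m -> R)
  (W : 'rV[R]_n -> R) : R :=
  \sum_s sigprob mu pi s * W (posterior mu pi s).

(* rho_B' (from pi') is a mean-preserving contraction of rho_B (from pi):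
   there is a coupling gamma of the two distributions of posteriors such that
   the conditional mean of the pi-posterior given the pi'-posterior is the
   pi'-posterior. *)
Definition mean_preserving_contraction (mu : 'rV[R]_n) (m m' : nat)
  (pi : 'I_n -> 'I_m -> R) (pi' : 'I_n -> 'I_m' -> R) : Prop :=
  exists gamma : 'I_m -> 'I_m' -> R,
    [/\ forall s s', 0 <= gamma s s',
        forall s, \sum_s' gamma s s' = sigprob mu pi s,
        forall s', \sum_s gamma s s' = sigprob mu pi' s' &
        forall s', \sum_s gamma s s' *: posterior mu pi s
                   = sigprob mu pi' s' *: posterior mu pi' s'].

Definition blackwell_geq (mu : 'rV[R]_n) (m m' : nat)
  (pi : 'I_n -> 'I_m -> R) (pi' : 'I_n -> 'I_m' -> R) : Prop :=
  [/\ experiment pi, experiment pi' & mean_preserving_contraction mu pi pi'].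

Definition exp_util (A : Type) (u : A -> 'I_n -> R) (y : 'rV[R]_n) (a : A) : R :=
  \sum_th y ord0 th * u a th.

Definition consistent_choice (A : Type) (u : A -> 'I_n -> R)
  (astar : 'rV[R]_n -> A) : Prop :=
  forall y, in_simplex y -> forall a, exp_util u y a <= exp_util u y (astar y).

(* The updating rule (distortion phi = phi^mu) respects the Blackwell order
   for mu. Theta = 'I_n is finite (discrete), so continuity of
   u : A x Theta -> R is continuity of u(., th) for each th. *)
Definition respects_blackwell (mu : 'rV[R]_n) (phi : 'rV[R]_n -> 'rV[R]_n) : Prop :=
  forall (A : topologicalType) (u : A -> 'I_n -> R) (astar : 'rV[R]_n -> A),
    compact [set: A] ->
    (forall th, continuous (fun a => u a th)) ->
    consistent_choice u astar ->
    forall (m m' : nat) (pi : 'I_n -> 'I_m -> R) (pi' : 'I_n -> 'I_m' -> R),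
      blackwell_geq mu pi pi' ->
      expect_post mu pi' (fun x => exp_util u x (astar (phi x)))
      <= expect_post mu pi (fun x => exp_util u x (astar (phi x))).

End BlackwellDefs.

(* Without expansive errors, the distortion maps each point [line_pt t] of
   the segment from [mu] to [x1] to a point [line_pt (g t)] with
   [0 <= g t <= t].  Since [mu] is interior, it can be split into a point on
   the far side of [mu] and any two points of the segment, and merging the two
   is a garbling; so respecting the Blackwell order makes the value of every
   decision problem convex along the segment.  For the bet "the belief lies
   beyond [line_pt s]", whose value at [line_pt t] is [t - s] when [s < g t]
   and [0] otherwise, convexity forces {t | g t <= s} to meet (s, 1) either
   nowhere or everywhere.  As [g 1 < 1], choosing [s = g s0] with
   [g 1 < s0 < 1] shows that [g] equals [g s0] on (g s0, 1). *)

From HB Require Import structures.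
From mathcomp Require Import all_boot all_order all_algebra.
From mathcomp Require Import all_classical all_reals topology normedtype.
From mathcomp Require Import ring lra.
Import numFieldNormedType.Exports.
Import Order.TTheory GRing.Theory Num.Theory.
Set Implicit Arguments. Unset Strict Implicit. Unset Printing Implicit Defensive.
Local Open Scope ring_scope.

Section Simplex.
Variables (R : realType) (n : nat).
Implicit Types (x y : 'rV[R]_n).

Lemma relint_in_simplex x : in_relint_simplex x -> in_simplex x.
Proof. by case=> x_gt0 x_sum; split=> // th; exact/ltW. Qed.

Lemma simplex_coord_le1 x j : in_simplex x -> x ord0 j <= 1.
Proof. by case=> x_ge0 <-; rewrite (bigD1 j) //= lerDl sumr_ge0. Qed.

Lemma segment_id x z : segment x x z -> z = x.
Proof. by case=> t [_ ->]; rewrite -scalerDl subrK scale1r. Qed.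

Lemma exists_coord_neq x y : x != y -> exists j, x ord0 j != y ord0 j.
Proof.
move=> /eqP x_neq_y; apply: contrapT => /forallNP x_eq_y; apply: x_neq_y.
by apply/rowP => j; apply/eqP/negPn/negP/x_eq_y.
Qed.

End Simplex.

Section Line.
Variables (R : realType) (n : nat) (mu x1 : 'rV[R]_n).

Definition line_pt (t : R) : 'rV[R]_n := (1 - t) *: mu + t *: x1.

Definition line_param (j : 'I_n) (y : 'rV[R]_n) : R :=
  (y ord0 j - mu ord0 j) / (x1 ord0 j - mu ord0 j).

Lemma line_pt0 : line_pt 0 = mu.
Proof. by rewrite /line_pt subr0 scale1r scale0r addr0. Qed.

Lemma line_pt1 : line_pt 1 = x1.
Proof. by rewrite /line_pt subrr scale0r scale1r add0r. Qed.

Lemma line_pt_comb a b t :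
  (1 - t) *: line_pt a + t *: line_pt b = line_pt ((1 - t) * a + t * b).
Proof. by apply/rowP => j; rewrite !mxE; ring. Qed.

Lemma line_pt_mean2 wa wb ta tb t :
  wa * ta + wb * tb = (wa + wb) * t ->
  wa *: line_pt ta + wb *: line_pt tb = (wa + wb) *: line_pt t.
Proof.
move=> mean; apply/rowP => j; rewrite !mxE.
transitivity ((wa + wb) * mu ord0 j + (wa * ta + wb * tb) * (x1 ord0 j - mu ord0 j)).
  by ring.
by rewrite mean; ring.
Qed.

Lemma line_pt_mean3 w1 w2 w3 t1 t2 t3 t :
  w1 + w2 + w3 = 1 -> w1 * t1 + w2 * t2 + w3 * t3 = t ->
  w1 *: line_pt t1 + w2 *: line_pt t2 + w3 *: line_pt t3 = line_pt t.
Proof.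
move=> w_sum mean; apply/rowP => j; rewrite !mxE.
transitivity ((w1 + w2 + w3) * mu ord0 j
              + (w1 * t1 + w2 * t2 + w3 * t3) * (x1 ord0 j - mu ord0 j)).
  by ring.
by rewrite w_sum mean; ring.
Qed.

Lemma line_paramK j t : x1 ord0 j != mu ord0 j -> line_param j (line_pt t) = t.
Proof. by move=> x1j_neq; rewrite /line_param !mxE; field; rewrite subr_eq0. Qed.

Lemma sum_line_pt t :
  \sum_th mu ord0 th = 1 -> \sum_th x1 ord0 th = 1 -> \sum_th line_pt t ord0 th = 1.
Proof.
move=> mu_sum x1_sum; under eq_bigr => th _ do rewrite !mxE.
by rewrite big_split /= -!mulr_sumr mu_sum x1_sum; ring.
Qed.

Lemma line_pt_simplex t :
  in_simplex mu -> in_simplex x1 -> 0 <= t <= 1 -> in_simplex (line_pt t).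
Proof.
move=> [mu_ge0 mu_sum] [x1_ge0 x1_sum] /andP[t_ge0 t_le1].
split; last exact: sum_line_pt.
by move=> th; rewrite !mxE addr_ge0 // mulr_ge0 // subr_ge0.
Qed.

Lemma line_pt_beyond_simplex :
  in_relint_simplex mu -> in_simplex x1 ->
  exists2 e : R, 0 < e & in_simplex (line_pt (- e)).
Proof.
move=> mu_int x1_simplex; have [mu_gt0 mu_sum] := mu_int.
pose e := \big[Order.min/1]_th mu ord0 th.
have e_gt0 : 0 < e by apply/bigmin_gtP; split.
exists e => //; split; last by apply: sum_line_pt => //; case: x1_simplex.
move=> th; have e_le : e <= mu ord0 th by exact: bigmin_le.
have := simplex_coord_le1 th x1_simplex; have [x1_ge0 _] := x1_simplex.
have := x1_ge0 th; rewrite !mxE; nra.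
Qed.

Lemma segment_line_pt_to_mu t z :
  0 <= t -> segment (line_pt t) mu z -> exists2 c, 0 <= c <= t & z = line_pt c.
Proof.
move=> t_ge0 [r [/andP[r_ge0 r_le1] ->]]; exists ((1 - r) * t).
  by apply/andP; split; nra.
by rewrite -line_pt0 line_pt_comb mulr0 addr0.
Qed.

Lemma line_pt_segment a b c :
  a <= c <= b -> segment (line_pt a) (line_pt b) (line_pt c).
Proof.
move=> /andP[ac cb]; have [ab|ab] := eqVneq a b.
  exists 0; split; first by rewrite lexx ler01.
  rewrite subr0 scale1r scale0r addr0; congr line_pt.
  by move: cb; rewrite -ab => ca; apply/le_anti; rewrite ca ac.
have ab_gt0 : 0 < b - a by rewrite subr_gt0 lt_neqAle ab (le_trans ac cb).
exists ((c - a) / (b - a)); split.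
  by apply/andP; split; [apply: divr_ge0; lra | rewrite ler_pdivrMr // mul1r; lra].
by rewrite line_pt_comb; congr line_pt; field; rewrite gt_eqF.
Qed.

Lemma open_segment_line_pt a b z :
  a < b -> open_segment (line_pt a) (line_pt b) z ->
  exists2 c, a < c < b & z = line_pt c.
Proof.
move=> ab [[t [/andP[t_ge0 t_le1] ->]] [z_neq_a z_neq_b]].
rewrite line_pt_comb in z_neq_a z_neq_b *.
have t_neq0 : t != 0 by apply: contra_notN z_neq_a => /eqP->; congr line_pt; ring.
have t_neq1 : t != 1 by apply: contra_notN z_neq_b => /eqP->; congr line_pt; ring.
have : 0 < t < 1 by rewrite !lt_neqAle eq_sym t_neq0 t_neq1 t_ge0 t_le1.
by move=> /andP[t_gt0 t_lt1]; exists ((1 - t) * a + t * b) => //; apply/andP; split; nra.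
Qed.

End Line.

Section Splitting.
Variables (R : realType) (n : nat) (mu : 'rV[R]_n) (m : nat).
Variables (w : 'I_m -> R) (P : 'I_m -> 'rV[R]_n).
Hypothesis mu_int : in_relint_simplex mu.
Hypothesis w_gt0 : forall s, 0 < w s.
Hypothesis P_simplex : forall s, in_simplex (P s).
Hypothesis P_mean : \sum_s w s *: P s = mu.

(* The experiment whose Bayesian distribution of posteriors puts weight [w s]
   on [P s]: Bayes' rule read backwards. *)
Definition split_exp : 'I_n -> 'I_m -> R := fun th s => w s * P s ord0 th / mu ord0 th.

Lemma sigprob_split_exp s : sigprob mu split_exp s = w s.
Proof.
have [mu_gt0 _] := mu_int; have [_ P_sum] := P_simplex s.
rewrite /sigprob /split_exp (eq_bigr (fun th => w s * P s ord0 th)) => [|th _].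
  by rewrite -mulr_sumr P_sum mulr1.
by field; rewrite gt_eqF.
Qed.

Lemma posterior_split_exp s : posterior mu split_exp s = P s.
Proof.
have [mu_gt0 _] := mu_int.
apply/rowP => th; rewrite /posterior mxE sigprob_split_exp /split_exp.
by field; rewrite !gt_eqF.
Qed.

Lemma split_exp_experiment : experiment split_exp.
Proof.
have [mu_gt0 _] := mu_int; move=> th; split.
  move=> s; have [P_ge0 _] := P_simplex s.
  by apply: divr_ge0; [apply: mulr_ge0; [exact: ltW | exact: P_ge0] | exact: ltW].
have mu_th : \sum_s w s * P s ord0 th = mu ord0 th.
  by rewrite -P_mean summxE; apply: eq_bigr => s _; rewrite mxE.
by rewrite /split_exp -mulr_suml mu_th divff // gt_eqF.
Qed.

Lemma expect_post_split_exp (W : 'rV[R]_n -> R) :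
  expect_post mu split_exp W = \sum_s w s * W (P s).
Proof.
by apply: eq_bigr => s _; rewrite sigprob_split_exp posterior_split_exp.
Qed.

End Splitting.

Definition blackwell_monotone (R : realType) (n : nat) (mu : 'rV[R]_n)
    (W : 'rV[R]_n -> R) : Prop :=
  forall (m m' : nat) (pi : 'I_n -> 'I_m -> R) (pi' : 'I_n -> 'I_m' -> R),
    blackwell_geq mu pi pi' -> expect_post mu pi' W <= expect_post mu pi W.

Section BlackwellMonotone.
Variables (R : realType) (n : nat) (mu : 'rV[R]_n) (W : 'rV[R]_n -> R).
Hypothesis mu_int : in_relint_simplex mu.
Hypothesis W_mono : blackwell_monotone mu W.

(* Merging the posteriors [a] and [b] of a three-signal experiment into their
   barycenter [p] is a garbling. *)
Lemma blackwell_monotone_merge (q a b p : 'rV[R]_n) (wq wa wb : R) :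
  in_simplex q -> in_simplex a -> in_simplex b -> in_simplex p ->
  0 < wq -> 0 < wa -> 0 < wb ->
  wq *: q + wa *: a + wb *: b = mu -> (wa + wb) *: p = wa *: a + wb *: b ->
  (wa + wb) * W p <= wa * W a + wb * W b.
Proof.
move=> q_s a_s b_s p_s wq_gt0 wa_gt0 wb_gt0 mean3 merge.
pose w3 (s : 'I_3) := [:: wq; wa; wb]`_s.
pose P3 (s : 'I_3) := [:: q; a; b]`_s.
pose w2 (s : 'I_2) := [:: wq; wa + wb]`_s.
pose P2 (s : 'I_2) := [:: q; p]`_s.
have w3_gt0 : forall s, 0 < w3 s by case=> [[|[|[|?]]] ?].
have w2_gt0 : forall s, 0 < w2 s by case=> [[|[|?]] ?] //; rewrite /w2 /= addr_gt0.
have P3_s : forall s, in_simplex (P3 s) by case=> [[|[|[|?]]] ?].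
have P2_s : forall s, in_simplex (P2 s) by case=> [[|[|?]] ?].
have P3_mean : \sum_s w3 s *: P3 s = mu.
  by rewrite !big_ord_recr big_ord0 /= add0r.
have P2_mean : \sum_s w2 s *: P2 s = mu.
  by rewrite !big_ord_recr big_ord0 /= add0r merge addrA.
pose gamma (s : 'I_3) (s' : 'I_2) : R :=
  match val s, val s' with 0, 0 => wq | 1, 1 => wa | 2, 1 => wb | _, _ => 0 end.
have coarser : blackwell_geq mu (split_exp mu w3 P3) (split_exp mu w2 P2).
  split; try exact: split_exp_experiment.
  exists gamma; split.
  - by case=> [[|[|[|?]]] ?] [[|[|?]] ?] //=; rewrite ltW.
  - move=> s; rewrite sigprob_split_exp // !big_ord_recr big_ord0 /=.
    by case: s => [[|[|[|?]]] ?] //=; rewrite /w3 /= ?add0r ?addr0.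
  - move=> s; rewrite sigprob_split_exp // !big_ord_recr big_ord0 /=.
    by case: s => [[|[|?]] ?] //=; rewrite /w2 /= ?add0r ?addr0.
  - move=> s; rewrite sigprob_split_exp // posterior_split_exp //.
    under eq_bigr => i _ do rewrite posterior_split_exp //.
    rewrite !big_ord_recr big_ord0 /=.
    by case: s => [[|[|?]] ?] //=; rewrite /w2 /P2 /P3 /= ?scale0r ?add0r ?addr0.
have := W_mono coarser.
rewrite !expect_post_split_exp // !big_ord_recr !big_ord0 /= !add0r.
by rewrite /w2 /w3 /P2 /P3 /= -addrA lerD2l.
Qed.

Lemma blackwell_monotone_line_convex (x1 : 'rV[R]_n) (ta tp tb : R) :
  in_simplex x1 -> 0 <= ta -> ta < tp -> tp < tb -> tb <= 1 ->
  (tb - ta) * W (line_pt mu x1 tp)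
  <= (tb - tp) * W (line_pt mu x1 ta) + (tp - ta) * W (line_pt mu x1 tb).
Proof.
move=> x1_s ta_ge0 ta_tp tp_tb tb_le1.
have mu_s := relint_in_simplex mu_int.
have [e e_gt0 q_s] := line_pt_beyond_simplex mu_int x1_s.
have X_s t : 0 <= t <= 1 -> in_simplex (line_pt mu x1 t).
  exact: line_pt_simplex.
(* [k] makes the weighted mean of the parameters [- e], [ta], [tb] vanish. *)
pose k := e / ((e + tp) * (tb - ta)).
have k_gt0 : 0 < k by apply: divr_gt0 => //; apply: mulr_gt0; lra.
pose wq := 1 - k * (tb - ta).
have wq_gt0 : 0 < wq.
  have -> : wq = 1 - e / (e + tp).
    by rewrite /wq /k; field; apply/andP; split; apply/lt0r_neq0; lra.
  by rewrite subr_gt0 ltr_pdivrMr; lra.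
have merged : (k * (tb - tp) + k * (tp - ta)) * W (line_pt mu x1 tp)
    <= k * (tb - tp) * W (line_pt mu x1 ta) + k * (tp - ta) * W (line_pt mu x1 tb).
  apply: (@blackwell_monotone_merge (line_pt mu x1 (- e)) _ _ _ wq) => //.
  - by apply: X_s; apply/andP; split; lra.
  - by apply: X_s; apply/andP; split; lra.
  - by apply: X_s; apply/andP; split; lra.
  - by apply: mulr_gt0; lra.
  - by apply: mulr_gt0; lra.
  - have w_sum : wq + k * (tb - tp) + k * (tp - ta) = 1 by rewrite /wq; ring.
    have w_mean : wq * - e + k * (tb - tp) * ta + k * (tp - ta) * tb = 0.
      by rewrite /wq /k; field; apply/andP; split; apply/lt0r_neq0; lra.
    by rewrite (line_pt_mean3 mu x1 w_sum w_mean) line_pt0.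
  - by symmetry; apply: line_pt_mean2; ring.
have w_sum : k * (tb - tp) + k * (tp - ta) = k * (tb - ta) by ring.
by rewrite -(ler_pM2l k_gt0) mulrDr !mulrA -w_sum.
Qed.

End BlackwellMonotone.

Section ThresholdValue.
Variables (R : realType) (g : R -> R).

Definition threshold_value (s t : R) : R := if s < g t then t - s else 0.

Hypothesis threshold_value_convex : forall s ta tp tb,
  0 <= ta -> ta < tp -> tp < tb -> tb <= 1 ->
  (tb - ta) * threshold_value s tp
  <= (tb - tp) * threshold_value s ta + (tp - ta) * threshold_value s tb.

Lemma threshold_value_le s t : s <= t -> threshold_value s t <= t - s.
Proof. by rewrite /threshold_value -subr_ge0; case: ifP. Qed.

Lemma threshold_value_self s : threshold_value s s = 0.
Proof. by rewrite /threshold_value subrr; case: ifP. Qed.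

Lemma threshold_value_below s t : g t <= s -> threshold_value s t = 0.
Proof. by rewrite /threshold_value ltNge => ->. Qed.

Lemma threshold_value_above s t : s < g t -> threshold_value s t = t - s.
Proof. by rewrite /threshold_value => ->. Qed.

Lemma threshold_below_left s s1 s2 :
  0 <= s -> s < s1 -> s1 < s2 -> s2 <= 1 -> g s2 <= s -> g s1 <= s.
Proof.
move=> s_ge0 s_s1 s1_s2 s2_le1 g2_le; rewrite leNgt; apply/negP => g1_gt.
have := threshold_value_convex s s_ge0 s_s1 s1_s2 s2_le1.
rewrite threshold_value_self (threshold_value_below g2_le).
rewrite (threshold_value_above g1_gt).
nra.
Qed.

Lemma threshold_below_right s s1 s2 :
  0 <= s -> s < s1 -> s1 < s2 -> s2 < 1 -> g s1 <= s -> g s2 <= s.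
Proof.
move=> s_ge0 s_s1 s1_s2 s2_lt1 g1_le; rewrite leNgt; apply/negP => g2_gt.
have s1_ge0 : 0 <= s1 by lra.
have := threshold_value_convex s s1_ge0 s1_s2 s2_lt1 (lexx 1).
have := @threshold_value_le s 1.
rewrite (threshold_value_below g1_le) (threshold_value_above g2_gt).
nra.
Qed.

Lemma threshold_below_all s s1 s2 :
  0 <= s -> s < s1 -> s1 < 1 -> s < s2 -> s2 < 1 -> g s1 <= s -> g s2 <= s.
Proof.
move=> s_ge0 s_s1 s1_lt1 s_s2 s2_lt1 g1_le.
case: (ltgtP s1 s2) => [s1_s2|s2_s1|<-] //.
- exact: (threshold_below_right s_ge0 s_s1).
- exact: (threshold_below_left s_ge0 s_s2 s2_s1 (ltW s1_lt1)).
Qed.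

(* The witness is [g s0] for any [s0] strictly between [g 1] and [1]. *)
Lemma threshold_flat :
  (forall t, 0 <= t <= 1 -> 0 <= g t <= t) -> g 1 < 1 ->
  exists cs, 0 <= cs <= g 1 /\ forall t, cs < t < 1 -> g t = cs.
Proof.
move=> g_range g1_lt1.
have /andP[g1_ge0 _] := g_range 1 (introT andP (conj ler01 (lexx 1))).
pose s0 := (g 1 + 1) / 2.
have g1_s0 : g 1 < s0 by rewrite /s0; lra.
have s0_lt1 : s0 < 1 by rewrite /s0; lra.
have /andP[cs_ge0 _] : 0 <= g s0 <= s0 by apply: g_range; apply/andP; split; lra.
have cs_le : g s0 <= g 1 by exact: (threshold_below_left g1_ge0 g1_s0 s0_lt1).
exists (g s0); split=> [|t /andP[cs_t t_lt1]]; first by rewrite cs_ge0.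
have cs_s0 : g s0 < s0 by lra.
apply/le_anti; rewrite (threshold_below_all cs_ge0 cs_s0 s0_lt1 cs_t t_lt1) //=.
rewrite leNgt; apply/negP => gt_lt.
have /andP[gt_ge0 _] : 0 <= g t <= t by apply: g_range; apply/andP; split; lra.
have gt_s0 : g t < s0 by lra.
have gt_t : g t < t by lra.
have := threshold_below_all gt_ge0 gt_t t_lt1 gt_s0 s0_lt1 (lexx _).
by rewrite leNgt gt_lt.
Qed.

End ThresholdValue.

Lemma discrete_continuous (X : discreteTopologicalType) (Y : topologicalType)
    (f : X -> Y) : continuous f.
Proof.
move=> x A /= fxA; rewrite nbhs_simpl.
by apply: filterS (discrete_set1 x) => y /= ->; exact: nbhs_singleton.
Qed.

Section Bets.
Variables (R : realType) (n : nat) (mu x1 : 'rV[R]_n) (j : 'I_n) (s : R).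

(* Betting [true] pays [line_param mu x1 j y - s] at any belief [y]. *)
Definition bet_util (a : bool) (th : 'I_n) : R :=
  if a then ((th == j)%:R - mu ord0 j) / (x1 ord0 j - mu ord0 j) - s else 0.

Definition bet_choice (y : 'rV[R]_n) : bool := s < line_param mu x1 j y.

Implicit Types y : 'rV[R]_n.

Lemma exp_util_bet_false y : exp_util bet_util y false = 0.
Proof. by rewrite /exp_util big1 // => th _; rewrite mulr0. Qed.

Lemma exp_util_bet_true y :
  \sum_th y ord0 th = 1 -> exp_util bet_util y true = line_param mu x1 j y - s.
Proof.
move=> y_sum; pose d := x1 ord0 j - mu ord0 j.
transitivity (\sum_th y ord0 th * (th == j)%:R / d
              - (\sum_th y ord0 th) * (mu ord0 j / d + s)).
  by rewrite mulr_suml -sumrB; apply: eq_bigr => th _; rewrite /bet_util; ring.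
rewrite y_sum mul1r (bigD1 j) //= eqxx big1 => [|th /negbTE ->]; last first.
  by rewrite mulr0 mul0r.
by rewrite /line_param -/d addr0 mulr1; ring.
Qed.

Lemma bet_choice_consistent : consistent_choice bet_util bet_choice.
Proof.
move=> y [_ y_sum] a; rewrite /bet_choice -subr_gt0 -(exp_util_bet_true y_sum).
by case: a; case: ltP => [pos|nonpos]; rewrite ?exp_util_bet_false //; exact: ltW.
Qed.

Lemma exp_util_bet_line t y :
  x1 ord0 j != mu ord0 j -> \sum_th mu ord0 th = 1 -> \sum_th x1 ord0 th = 1 ->
  exp_util bet_util (line_pt mu x1 t) (bet_choice y)
  = if s < line_param mu x1 j y then t - s else 0.
Proof.
move=> x1j_neq mu_sum x1_sum; rewrite /bet_choice; case: ifP => _.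
  by rewrite exp_util_bet_true ?sum_line_pt // line_paramK.
exact: exp_util_bet_false.
Qed.

End Bets.

Section DistortionOnLine.
Variables (R : realType) (n : nat) (mu x1 : 'rV[R]_n) (phi : 'rV[R]_n -> 'rV[R]_n).
Variable j : 'I_n.
Hypothesis mu_int : in_relint_simplex mu.
Hypothesis x1_simplex : in_simplex x1.
Hypothesis x1j_neq : x1 ord0 j != mu ord0 j.

Definition line_distortion (t : R) : R := line_param mu x1 j (phi (line_pt mu x1 t)).

Lemma no_expansive_error_line t :
  (forall x, in_simplex x -> ~ expansive_error mu phi x) -> 0 <= t <= 1 ->
  phi (line_pt mu x1 t) = line_pt mu x1 (line_distortion t)
  /\ 0 <= line_distortion t <= t.
Proof.
move=> no_expansive /[dup] t01 /andP[t_ge0 _].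
have mu_s := relint_in_simplex mu_int.
have := contrapT (no_expansive _ (line_pt_simplex mu_s x1_simplex t01)).
case/(segment_line_pt_to_mu t_ge0) => c c_range phiE.
by rewrite /line_distortion phiE line_paramK.
Qed.

Lemma respects_blackwell_threshold_convex s ta tp tb :
  respects_blackwell mu phi -> 0 <= ta -> ta < tp -> tp < tb -> tb <= 1 ->
  (tb - ta) * threshold_value line_distortion s tp
  <= (tb - tp) * threshold_value line_distortion s ta
   + (tp - ta) * threshold_value line_distortion s tb.
Proof.
move=> phi_blackwell ta_ge0 ta_tp tp_tb tb_le1.
have W_mono : blackwell_monotone mu
    (fun x => exp_util (bet_util mu x1 j s) x (bet_choice mu x1 j s (phi x))).
  move=> m m' pi pi'; apply: (phi_blackwell _ _ _ bool_compact).
    by move=> th; exact: discrete_continuous.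
  exact: bet_choice_consistent.
have := blackwell_monotone_line_convex mu_int W_mono x1_simplex ta_ge0 ta_tp tp_tb tb_le1.
have [[_ mu_sum] [_ x1_sum]] := (relint_in_simplex mu_int, x1_simplex).
by rewrite !exp_util_bet_line.
Qed.

End DistortionOnLine.

Unset Implicit Arguments.

Theorem corollary4 (R : realType) (n : nat) (mu : 'rV[R]_n)
  (phi : 'rV[R]_n -> 'rV[R]_n) (x1 : 'rV[R]_n) :
  (2 <= n)%N ->
  in_relint_simplex mu ->
  (forall x, in_simplex x -> in_simplex (phi x)) ->
  respects_blackwell mu phi ->
  in_simplex x1 ->
  contractive_error mu phi x1 ->
  (forall x, in_simplex x -> ~ expansive_error mu phi x) ->
  exists x1s : 'rV[R]_n,
    segment mu (phi x1) x1s /\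
    (forall x', open_segment x1s x1 x' -> phi x' = x1s).
Proof.
move=> _ mu_int _ phi_blackwell x1_s [x1_seg phix1_neq] no_expansive.
have x1_neq_mu : x1 != mu.
  apply/eqP => x1_mu; apply: phix1_neq.
  by move: x1_seg; rewrite x1_mu; exact: segment_id.
have [j x1j_neq] := exists_coord_neq x1_neq_mu.
pose X := line_pt mu x1; pose g := line_distortion mu x1 phi j.
have g_line t : 0 <= t <= 1 -> phi (X t) = X (g t) /\ 0 <= g t <= t.
  exact: no_expansive_error_line.
have [phix1E /andP[_ g1_le1]] := g_line 1 (introT andP (conj ler01 (lexx 1))).
rewrite /X line_pt1 in phix1E.
have g1_lt1 : g 1 < 1.
  rewrite lt_neqAle g1_le1 andbT; apply: contra_notN phix1_neq => /eqP g1E.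
  by rewrite phix1E g1E /X line_pt1.
have g_convex s ta tp tb :=
  @respects_blackwell_threshold_convex R n mu x1 phi j mu_int x1_s x1j_neq s ta tp tb
    phi_blackwell.
have [cs [/andP[cs_ge0 cs_le] g_flat]] :=
  threshold_flat g_convex (fun t t01 => (g_line t t01).2) g1_lt1.
exists (X cs); split.
  by move: (@line_pt_segment R n mu x1 0 (g 1) cs); rewrite line_pt0 phix1E cs_ge0; apply.
rewrite -[Y in open_segment _ Y](line_pt1 mu).
move=> x' /open_segment_line_pt[|t /andP[cs_t t_lt1] ->]; first exact: le_lt_trans cs_le g1_lt1.
have t01 : 0 <= t <= 1 by apply/andP; split; lra.
by rewrite (g_line t t01).1 /g g_flat // cs_t.
Qed.
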